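(* Let $\mathbf z$ be a crystal. For every $\mathbf x\in\mathcal M_\infty(\bar c(\mathbf z))$, $$\|\mathbf h(\mathbf x)\|_\infty\le R(\mathbf z)\,\|\nabla\mathbf h(\mathbf x)\|_\infty.$$ In particular, for $0<c\le\bar c(\mathbf z)/R(\mathbf z)$ every $\mathbf x$ for which $\mathbf h(\mathbf x)$ is defined and $\|\nabla\mathbf h(\mathbf x)\|_\infty\le c$ lies in $\mathcal M_\infty(R(\mathbf z)c)\subset\mathcal M_\infty(\bar c(\mathbf z))$, so $\mathcal M^\nabla_\infty(c)$ is well defined.
   Context: Fix $a>0$, $b>0$. A crystal is $\mathbf z=(z_i)_{i=1}^N\in(\mathbb R^d)^N$ with $|z_i-z_j|=a$ or $>b$ for all $i\ne j$; pairs at distance $a$ are neighboring, $\langle i,j\rangle$. $\mathcal M=\{(\theta z_i+\eta)_i:\theta\in SO(d),\eta\in\mathbb R^d\}$. $\bar c(\mathbf z)>0$ is a constant such that every $\mathbf x$ with $\inf_{\mathbf y\in\mathcal M}\max_i|x_i-y_i|\le\bar c(\mathbf z)$ has a unique minimizer $\mathbf z(\mathbf x)\in\mathcal M$ of $(\sum_i|x_i-y_i|^2)^{1/2}$; $\mathbf h(\mathbf x)=\mathbf x-\mathbf z(\mathbf x)$. $\|\mathbf h\|_\infty=\max_i|h_i|$, $\|\nabla\mathbf h\|_\infty=\max_{\langle i,j\rangle}|h_i-h_j|$; $\mathcal M_\infty(c)=\{\mathbf x:\|\mathbf h(\mathbf x)\|_\infty\le c\}$, $\mathcal M^\nabla_\infty(c)=\{\mathbf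 x:\|\nabla\mathbf h(\mathbf x)\|_\infty\le c\}$. $R(\mathbf z)$ is the maximum over $i\ne j$ of the length (number of steps) of a shortest path $i=i_0\sim i_1\sim\cdots\sim i_n=j$ with each $\langle i_k,i_{k+1}\rangle$ neighboring ($+\infty$ if none exists). *)

From HB Require Import structures.
From mathcomp Require Import all_boot all_order all_algebra.
From mathcomp Require Import reals.
Set Implicit Arguments. Unset Strict Implicit. Unset Printing Implicit Defensive.
Import Order.TTheory GRing.Theory Num.Theory.
Local Open Scope ring_scope.

Section Defs.
Variables (R : realType) (d N : nat).

Definition config := 'I_N -> 'rV[R]_d.

Definition enorm (v : 'rV[R]_d) : R := Num.sqrt (\sum_(k < d) v 0 k ^+ 2).

Definition cdiff (x y : config) : config := fun i => x i - y i.

Definition is_rotation (Q : 'M[R]_d) : Prop := Q^T *m Q = 1%:M /\ \det Q = 1.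

(* the manifold M of rigid motions of z : (theta z_i + eta)_i ; with row
   vectors theta z_i is written z_i *m Q, Q ranging over SO(d). *)
Definition motions (z : config) (y : config) : Prop :=
  exists (Q : 'M[R]_d) (eta : 'rV[R]_d),
    is_rotation Q /\ forall i, y i = z i *m Q + eta.

Definition crystal (a b : R) (z : config) : Prop :=
  forall i j : 'I_N, i != j -> enorm (z i - z j) = a \/ b < enorm (z i - z j).

Definition nbr (a : R) (z : config) : rel 'I_N :=
  fun i j => (i != j) && (enorm (z i - z j) == a).

Definition supn (h : config) : R := \big[Num.max/0]_(i < N) enorm (h i).

Definition gradn (a : R) (z : config) (h : config) : R :=
  \big[Num.max/0]_(i < N) \big[Num.max/0]_(j < N | nbr a z i j) enorm (h i - h j).

Definition l2dist (x y : config) : R :=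
  Num.sqrt (\sum_(i < N) enorm (x i - y i) ^+ 2).

Definition is_minimizer (z x y : config) : Prop :=
  motions z y /\ forall y', motions z y' -> l2dist x y <= l2dist x y'.

Definition inf_sup_le (z x : config) (c : R) : Prop :=
  forall eps : R, 0 < eps -> exists y, motions z y /\ supn (cdiff x y) < c + eps.

Definition cbar_ok (z : config) (cbar : R) : Prop :=
  0 < cbar /\
  forall x : config, inf_sup_le z x cbar ->
    exists y, is_minimizer z x y /\ forall y', is_minimizer z x y' -> y' = y.

Definition walk (a : R) (z : config) (i j : 'I_N) (n : nat) : bool :=
  [exists s : n.-tuple 'I_N, path (nbr a z) i s && (last i s == j)].

(* length of a shortest path from i to j (if one exists it has < N steps,
   so searching n in 0..N-1 finds it) *)
Definition gdist (a : R) (z : config) (i j : 'I_N) : nat :=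
  find (walk a z i j) (iota 0 N).

(* every pair of distinct particles is joined by a path (R(z) < +oo) *)
Definition nbr_connected (a : R) (z : config) : Prop :=
  forall i j : 'I_N, i != j -> exists n, walk a z i j n.

Definition Rz (a : R) (z : config) : nat :=
  \max_(i < N) \max_(j < N | i != j) gdist a z i j.

End Defs.

(* Translating a configuration by a constant vector keeps it in the manifold
   of rigid motions, so optimality of the minimizer y with respect to
   translations forces the displacements h_i = x_i - y_i to sum to zero.
   Hence N h_i = sum_j (h_i - h_j), and each h_i - h_j telescopes along a
   shortest path of neighbors, which has at most R(z) steps, each of length
   at most ||grad h||. *)
From HB Require Import structures.
From mathcomp Require Import all_boot all_order all_algebra.
From mathcomp Require Import reals ring.
Import Order.TTheory GRing.Theory Num.Theory.
Set Implicit Arguments. Unset Strict Implicit. Unset Printing Implicit Defensive.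
Local Open Scope ring_scope.

Lemma sumr_mul_sqr_le (R : realDomainType) (I : finType) (u v : I -> R) :
  (\sum_i u i * v i) ^+ 2 <= (\sum_i u i ^+ 2) * (\sum_i v i ^+ 2).
Proof.
set U := \sum_i u i ^+ 2; set V := \sum_i v i ^+ 2; set W := \sum_i u i * v i.
have inner k : \sum_l (u k * v l - u l * v k) ^+ 2 =
    u k ^+ 2 * V + v k ^+ 2 * U - (u k * v k * W) *+ 2.
  rewrite !mulr_sumr -sumrMnl -!big_split -sumrB /=.
  by apply: eq_bigr => l _; ring.
have lagrange : \sum_k \sum_l (u k * v l - u l * v k) ^+ 2 = (U * V - W ^+ 2) *+ 2.
  rewrite (eq_bigr _ (fun k _ => inner k)) sumrB big_split /=.
  rewrite sumrMnl -(mulr_suml _ _ _ V) -(mulr_suml _ _ _ U) -(mulr_suml _ _ _ W).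
  by rewrite -/U -/V -/W; ring.
have /[!lagrange] : 0 <= \sum_k \sum_l (u k * v l - u l * v k) ^+ 2.
  by apply: sumr_ge0 => k _; apply: sumr_ge0 => l _; exact: sqr_ge0.
by rewrite pmulrn_lge0 // subr_ge0.
Qed.

Lemma sumr_sub_mean_sqr (R : numFieldType) n (c : 'I_n.+1 -> R) :
  \sum_i (c i - (\sum_j c j) / n.+1%:R) ^+ 2 =
  \sum_i c i ^+ 2 - (\sum_i c i) ^+ 2 / n.+1%:R.
Proof.
set s := \sum_j c j; set m := s / n.+1%:R.
rewrite (eq_bigr (fun i => c i ^+ 2 - (c i * m) *+ 2 + m ^+ 2)) => [|i _]; last by ring.
rewrite big_split sumrB /= sumr_const card_ord sumrMnl -mulr_suml -/s /m.
by field; rewrite addrC natr1 pnatr_eq0.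
Qed.

Section EuclideanNorm.
Variables (R : realType) (d : nat).
Implicit Types u v : 'rV[R]_d.

Lemma enorm_ge0 v : 0 <= enorm v.
Proof. exact: sqrtr_ge0. Qed.

Lemma enorm_sqr v : enorm v ^+ 2 = \sum_k v 0 k ^+ 2.
Proof. by rewrite sqr_sqrtr // sumr_ge0 // => k _; exact: sqr_ge0. Qed.

Lemma enorm0 : enorm (0 : 'rV[R]_d) = 0.
Proof. by rewrite /enorm big1 ?sqrtr0 // => k _; rewrite mxE expr0n. Qed.

Lemma enorm_eq0 v : enorm v = 0 -> v = 0.
Proof.
move=> /(congr1 (fun r => r ^+ 2)); rewrite enorm_sqr expr0n /=.
move=> /psumr_eq0P v0; apply/rowP => k; rewrite mxE; apply/eqP.
by rewrite -sqrf_eq0 v0 // => l _; exact: sqr_ge0.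
Qed.

Lemma enormD u v : enorm (u + v) <= enorm u + enorm v.
Proof.
rewrite -(ler_pXn2r (isT : (0 < 2)%N)) ?nnegrE ?addr_ge0 ?enorm_ge0 //.
have -> : enorm (u + v) ^+ 2 =
    enorm u ^+ 2 + (\sum_k u 0 k * v 0 k) *+ 2 + enorm v ^+ 2.
  rewrite !enorm_sqr -sumrMnl -!big_split /=; apply: eq_bigr => k _.
  by rewrite !mxE; ring.
rewrite sqrrD lerD2r lerD2l lerMn2r /= (le_trans (ler_norm _)) //.
rewrite -(ler_pXn2r (isT : (0 < 2)%N)) ?nnegrE ?mulr_ge0 ?enorm_ge0 //.
by rewrite real_normK ?num_real // exprMn !enorm_sqr sumr_mul_sqr_le.
Qed.

Lemma enormMn v n : enorm (v *+ n) = enorm v *+ n.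
Proof.
rewrite /enorm (eq_bigr (fun k => n%:R ^+ 2 * v 0 k ^+ 2)) => [|k _]; last first.
  by rewrite mulmxnE -exprMn mulr_natl.
by rewrite -mulr_sumr sqrtrM ?sqr_ge0 // sqrtr_sqr ger0_norm ?ler0n // mulr_natl.
Qed.

Lemma enorm_sum (I : finType) (F : I -> 'rV[R]_d) :
  enorm (\sum_i F i) <= \sum_i enorm (F i).
Proof.
elim/big_rec2: _ => [|i y1 y2 _ IH]; first by rewrite enorm0.
by apply: le_trans (enormD _ _) _; rewrite lerD2l.
Qed.

Lemma sum_enorm_sub_mean_sqr n (h : 'I_n.+1 -> 'rV[R]_d) :
  \sum_i enorm (h i - n.+1%:R^-1 *: \sum_j h j) ^+ 2 =
  \sum_i enorm (h i) ^+ 2 - enorm (\sum_i h i) ^+ 2 / n.+1%:R.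
Proof.
have coord i k : (h i - n.+1%:R^-1 *: \sum_j h j) 0 k =
    h i 0 k - (\sum_j h j 0 k) / n.+1%:R.
  by rewrite !mxE summxE mulrC.
under eq_bigr do rewrite enorm_sqr.
under [X in _ = X - _]eq_bigr do rewrite enorm_sqr.
rewrite enorm_sqr mulr_suml exchange_big [X in _ = X - _]exchange_big -sumrB /=.
apply: eq_bigr => k _; rewrite summxE -sumr_sub_mean_sqr.
by apply: eq_bigr => i _; rewrite coord.
Qed.

End EuclideanNorm.

Lemma minimizer_sum_eq0 (R : realType) (d N : nat) (z x y : config R d N) :
  is_minimizer z x y -> \sum_i cdiff x y i = 0.
Proof.
case=> -[Q [eta [rotQ zQ]]] ymin.
case: N z x y zQ ymin => [|n] z x y zQ ymin; first by rewrite big_ord0.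
set S := \sum_i cdiff x y i; set t := n.+1%:R^-1 *: S.
have motion_t : motions z (fun i => y i + t).
  by exists Q, (eta + t); split=> // i; rewrite zQ addrA.
have := ymin _ motion_t; rewrite /l2dist ler_sqrt; last first.
  by apply: sumr_ge0 => i _; exact: sqr_ge0.
under [X in _ <= X]eq_bigr do rewrite opprD addrA.
rewrite sum_enorm_sub_mean_sqr -/S lerDl oppr_ge0 => S_le0.
apply: enorm_eq0; apply/eqP; rewrite -sqrf_eq0 eq_le sqr_ge0 andbT.
by move: S_le0; rewrite pmulr_lle0 // invr_gt0 ltr0n.
Qed.

Section NeighborGraph.
Variables (R : realType) (d N : nat) (a : R) (z : config R d N).
Implicit Types (h : config R d N) (i j : 'I_N).

Lemma gradn_ge0 h : 0 <= gradn a z h.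
Proof. exact: bigmax_ge_id. Qed.

Lemma nbr_enorm_le_gradn h i j :
  nbr a z i j -> enorm (h i - h j) <= gradn a z h.
Proof.
move=> ij; apply: le_trans (le_bigmax _ _ i).
exact: (@le_bigmax_cond _ _ _ 0 j (nbr a z i) (fun j => enorm (h i - h j))).
Qed.

Lemma path_enorm_le_gradn h i s :
  path (nbr a z) i s -> enorm (h i - h (last i s)) <= gradn a z h *+ size s.
Proof.
elim: s i => [|k s IH] i /=; first by rewrite subrr enorm0.
case/andP=> ik ks; rewrite -(subrKA (h k)) mulrS.
by apply: le_trans (enormD _ _) _; rewrite lerD ?nbr_enorm_le_gradn ?IH.
Qed.

Lemma walk_enorm_le_gradn h i j n :
  walk a z i j n -> enorm (h i - h j) <= gradn a z h *+ n.
Proof.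
case/existsP=> s /andP[path_s /eqP <-].
by rewrite -[X in _ *+ X](size_tuple s) path_enorm_le_gradn.
Qed.

Lemma walk_gdist i j n : walk a z i j n -> walk a z i j (gdist a z i j).
Proof.
case/existsP=> s /andP[path_s /eqP].
case: (shortenP path_s) => s' path_s' uniq_s' _ last_s' {s path_s}.
have short : (size s' < N)%N.
  rewrite -[(size s').+1]/(size (i :: s')) -(card_uniqP uniq_s').
  by rewrite -[X in (_ <= X)%N]card_ord max_card.
have walk_s' : walk a z i j (size s').
  by apply/existsP; exists (in_tuple s'); rewrite path_s' last_s' eqxx.
have has_walk : has (walk a z i j) (iota 0 N).
  by apply/hasP; exists (size s'); rewrite ?mem_iota.
have := nth_find 0%N has_walk; rewrite nth_iota //.
by rewrite -[X in (_ < X)%N](size_iota 0 N) -has_find.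
Qed.

Lemma gdist_le_Rz i j : i != j -> (gdist a z i j <= Rz a z)%N.
Proof.
move=> ij; apply: leq_trans (@leq_bigmax_cond _ _ (gdist a z i) _ ij) _.
exact: (@leq_bigmax _ (fun i => \max_(j < N | i != j) gdist a z i j)).
Qed.

Hypothesis z_connected : nbr_connected a z.

Lemma enorm_sub_le_Rz_gradn h i j :
  enorm (h i - h j) <= (Rz a z)%:R * gradn a z h.
Proof.
have [<-|ij] := eqVneq i j.
  by rewrite subrr enorm0 mulr_ge0 ?ler0n ?gradn_ge0.
have [n /walk_gdist /(walk_enorm_le_gradn h)] := z_connected ij.
move/le_trans; apply; rewrite -[X in X <= _]mulr_natl ler_wpM2r ?gradn_ge0 // ler_nat.
exact: gdist_le_Rz.
Qed.

Lemma supn_le_Rz_gradn h :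
  \sum_i h i = 0 -> supn h <= (Rz a z)%:R * gradn a z h.
Proof.
move=> h_sum0; apply: bigmax_le => [|i _]; first by rewrite mulr_ge0 ?ler0n ?gradn_ge0.
have N_gt0 : (0 < N)%N := leq_ltn_trans (leq0n i) (ltn_ord i).
suff : enorm (h i) *+ N <= ((Rz a z)%:R * gradn a z h) *+ N.
  by rewrite lerMn2r eqn0Ngt N_gt0.
rewrite -enormMn (_ : h i *+ N = \sum_j (h i - h j)); last first.
  by rewrite sumrB h_sum0 subr0 sumr_const card_ord.
apply: le_trans (enorm_sum _) _.
apply: le_trans (ler_sum _ (fun j _ => enorm_sub_le_Rz_gradn h i j)) _.
by rewrite sumr_const card_ord.
Qed.

End NeighborGraph.

Theorem lemma2p4 (R : realType) (d N : nat) (a b : R) (z : config R d N)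
    (cbar : R) :
  0 < a -> 0 < b -> crystal a b z -> nbr_connected a z -> cbar_ok z cbar ->
  (forall x y : config R d N,
      inf_sup_le z x cbar -> is_minimizer z x y ->
      supn (cdiff x y) <= cbar ->
      supn (cdiff x y) <= (Rz a z)%:R * gradn a z (cdiff x y)) /\
  (forall c : R, 0 < c -> (Rz a z)%:R * c <= cbar ->
    forall x y : config R d N,
      inf_sup_le z x cbar -> is_minimizer z x y ->
      gradn a z (cdiff x y) <= c ->
      supn (cdiff x y) <= (Rz a z)%:R * c /\ (Rz a z)%:R * c <= cbar).
Proof.
(* The crystal and cbar hypotheses only ensure that h(x) is well defined;
   the bound itself uses nothing but the minimizing property of y. *)
move=> _ _ _ z_connected _.
have supn_le x y : is_minimizer z x y ->
    supn (cdiff x y) <= (Rz a z)%:R * gradn a z (cdiff x y).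
  by move=> /minimizer_sum_eq0; exact: supn_le_Rz_gradn.
split=> [x y _ /supn_le //|c _ Rc_le x y _ /supn_le supn_le_grad grad_le].
split=> //; apply: le_trans supn_le_grad _.
by rewrite ler_wpM2l ?ler0n.
Qed.
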